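(* Let $k\in\mathbb{N}$. (a) Let $P\in\mathbb{C}[x]$. There exists $Q\in\mathbb{C}[x]$ such that $P,Q$ satisfy (i)–(iii) below if and only if $\deg P\le k$, $P$ has parity $(k\bmod 2)$, and (iv.a) $|P(x)|\le 1$ for all $x\in[-1,1]$; (iv.b) $|P(x)|\ge 1$ for all $x\in(-\infty,-1]\cup[1,\infty)$; (iv.c) if $k$ is even, then $P(ix)P^*(ix)\ge 1$ for all $x\in\mathbb{R}$. (b) Let $Q\in\mathbb{C}[x]$. There exists $P\in\mathbb{C}[x]$ such that $P,Q$ satisfy (i)–(iii) if and only if $\deg Q\le k-1$, $Q$ has parity $(k-1\bmod 2)$, and (v.a) $\sqrt{1-x^2}\,|Q(x)|\le 1$ for all $x\in[-1,1]$; (v.b) if $k$ is odd, then $(1+x^2)Q(ix)Q^*(ix)\ge 1$ for all $x\in\mathbb{R}$. Here the conditions are: (i) $\deg P\le k$, $\deg Q\le k-1$; (ii) $P$ has parity $(k\bmod 2)$ and $Q$ has parity $(k-1\bmod 2)$; (iii) $|P(x)|^2+(1-x^2)|Q(x)|^2=1$ for all $x\in[-1,1]$.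
   Context: For $P(x)=\sum_j a_jx^j\in\mathbb{C}[x]$, $P^*(x):=\sum_j \overline{a_j}x^j$. A polynomial is even (odd) if all its odd-power (even-power) coefficients vanish; the zero polynomial is both. $P$ has parity $z\in\mathbb{Z}$ if $z$ is even and $P$ is even, or $z$ is odd and $P$ is odd. *)

(* The complex field C is modelled as an arbitrary
   numClosedFieldType (algebraically closed field with conjugation/norm). *)
From HB Require Import structures.
From mathcomp Require Import all_boot all_order all_algebra.
Set Implicit Arguments. Unset Strict Implicit. Unset Printing Implicit Defensive.
Import Order.TTheory GRing.Theory Num.Theory.
Local Open Scope ring_scope.

Definition conjp (C : numClosedFieldType) (P : {poly C}) : {poly C} :=
  map_poly Num.conj P.

Definition even_poly_p (C : numClosedFieldType) (P : {poly C}) : Prop :=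
  forall j : nat, odd j -> P`_j = 0.

Definition odd_poly_p (C : numClosedFieldType) (P : {poly C}) : Prop :=
  forall j : nat, ~~ odd j -> P`_j = 0.

Definition has_parity (C : numClosedFieldType) (P : {poly C}) (z : int) : Prop :=
  if odd `|z|%N then odd_poly_p P else even_poly_p P.

Definition QSP_cond (C : numClosedFieldType) (k : nat) (P Q : {poly C}) : Prop :=
  [/\ ((size P <= k.+1)%N /\ (size Q <= k)%N),
      (has_parity P k%:Z /\ has_parity Q (k%:Z - 1)) 
    & (forall x : C, x \is Num.real -> -1 <= x <= 1 ->
        `|P.[x]| ^+ 2 + (1 - x ^+ 2) * `|Q.[x]| ^+ 2 = 1)].

From HB Require Import structures.
From mathcomp Require Import all_boot all_order all_algebra.
From mathcomp Require Import zify.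
Set Implicit Arguments. Unset Strict Implicit. Unset Printing Implicit Defensive.
Import Order.TTheory GRing.Theory Num.Theory.
Local Open Scope ring_scope.

(* Write e for the parity of k, P = X^e u(X^2) and Q = X^(1-e) v(X^2).  In the
   variable y = x^2, condition (iii) becomes the polynomial identity
   y^e u u^* + (1 - y) y^(1-e) v v^* = 1.  Necessity is read off this identity at
   real points x and at imaginary points ix.  Conversely, given P, the real
   polynomial D = 1 - y^e u u^* vanishes at the roots of b = (1 - y) y^(1-e) and
   has the sign of b on the real line (this is what (iv) says), so D / b is a
   polynomial that is nonnegative on R; by the Fejer-Riesz factorization (nonreal
   roots come in conjugate pairs, real roots are double) it is v v^* for some v.
   Given Q, the same argument applies to 1 - (1 - y) y^(1-e) v v^* and b = y^e. *)

Section Conjugate.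
Variable C : numClosedFieldType.
Implicit Types (p q : {poly C}) (x y z : C).

Lemma conjp_horner p x : (conjp p).[x^*] = (p.[x])^*.
Proof. exact: horner_map. Qed.

Lemma conjp_hornerR p y : y \is Num.real -> (conjp p).[y] = (p.[y])^*.
Proof. by move=> yr; rewrite -{1}(conj_Creal yr) conjp_horner. Qed.

Lemma horner_mul_conjpR p y : y \is Num.real ->
  p.[y] * (conjp p).[y] = `|p.[y]| ^+ 2.
Proof. by move=> yr; rewrite conjp_hornerR // normCK. Qed.

Lemma conjpM p q : conjp (p * q) = conjp p * conjp q.
Proof. exact: rmorphM. Qed.

Lemma conjpN p : conjp (- p) = - conjp p.
Proof. exact: rmorphN. Qed.

Lemma conjpXsubC z : conjp ('X - z%:P) = 'X - (z^*)%:P.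
Proof. by rewrite /conjp rmorphB /= map_polyX map_polyC. Qed.

Lemma size_conjp p : size (conjp p) = size p.
Proof. exact: size_map_poly. Qed.

Lemma size_mul_conjp p : size (p * conjp p) = (size p).*2.-1.
Proof.
have [->|p0] := eqVneq p 0; first by rewrite mul0r size_poly0.
by rewrite size_mul ?size_conjp ?addnn // -size_poly_eq0 size_conjp size_poly_eq0.
Qed.

End Conjugate.

Section Roots.
Variable C : numClosedFieldType.
Implicit Types (p : {poly C}) (y z : C).

Lemma exists_nonroot_inj p (a : nat -> C) : p != 0 -> injective a ->
  exists n, ~~ root p (a n).
Proof.
move=> p0 a_inj; set rs := map a (iota 0 (size p)).
have rs_uniq : uniq rs by rewrite map_inj_uniq ?iota_uniq.
have [rs_roots|/allPn[_ /mapP[n _ ->] pn]] := boolP (all (root p) rs); last by exists n.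
by have := max_poly_roots p0 rs_roots rs_uniq; rewrite size_map size_iota ltnn.
Qed.

Lemma inv_natS_inj : injective (fun n : nat => (n.+1%:R : C)^-1).
Proof. by move=> m n /invr_inj /eqP; rewrite eqr_nat eqSS => /eqP. Qed.

Lemma poly_eq0_unit_interval p :
  (forall y, y \is Num.real -> 0 <= y <= 1 -> p.[y] = 0) -> p = 0.
Proof.
move=> p0; apply/eqP/contraT => /exists_nonroot_inj/(_ inv_natS_inj)[n].
by rewrite rootE p0 ?eqxx ?rpredV ?realn // invr_ge0 ler0n invf_le1 ?ltr0n ?ler1n.
Qed.

Lemma exists_nonroot_near p z t0 : p != 0 -> 0 < t0 ->
  exists t, [/\ 0 < t, t <= t0 & p.[z + t] != 0].
Proof.
move=> p0 t0_gt0.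
have a_inj : injective (fun n : nat => z + t0 / n.+1%:R).
  by move=> m n /addrI /(mulfI (lt0r_neq0 t0_gt0)) /inv_natS_inj.
have [n pn] := exists_nonroot_inj p0 a_inj; exists (t0 / n.+1%:R).
by rewrite divr_gt0 // ler_pdivrMr // ler_peMr ?ler1n ?ltW.
Qed.

End Roots.

Section RealPoly.
Variable C : numClosedFieldType.
Implicit Types (p b g : {poly C}) (y z t : C).

Lemma horner_norm_le p y K : `|y| <= K ->
  `|p.[y]| <= \sum_(i < size p) `|p`_i| * K ^+ i.
Proof.
move=> yK; have K0 := le_trans (normr_ge0 y) yK.
rewrite horner_coef; apply: le_trans (ler_norm_sum _ _ _) _.
by apply: ler_sum => i _; rewrite normrM normrX ler_wpM2l ?lerXn2r ?nnegrE.
Qed.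

Lemma horner_cont p z c : 0 < c ->
  exists2 t0, 0 < t0 & forall t, `|t| <= t0 -> `|p.[z + t] - p.[z]| < c.
Proof.
move=> c_gt0.
have /factor_theorem[r pE] : root (p - p.[z]%:P) z by rewrite rootE !hornerE subrr.
have diffE t : p.[z + t] - p.[z] = r.[z + t] * t.
  by have := congr1 (horner^~ (z + t)) pE; rewrite !hornerE addrAC subrr add0r.
set M := \sum_(i < size r) `|r`_i| * (`|z| + 1) ^+ i.
have M0 : 0 <= M by rewrite sumr_ge0 // => i _; rewrite mulr_ge0 ?exprn_ge0 ?addr_ge0.
have d_gt0 : 0 < c + M + 1 by rewrite -addrA ltr_wpDr ?addr_ge0.
exists (c / (c + M + 1)) => [|t t_le]; first by rewrite divr_gt0.
have t_le1 : `|t| <= 1.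
  by rewrite (le_trans t_le) // ler_pdivrMr // mul1r -addrA lerDl addr_ge0.
rewrite diffE normrM (@le_lt_trans _ _ (M * (c / (c + M + 1)))) //.
  by rewrite ler_pM ?horner_norm_le // (le_trans (ler_normD _ _)) ?lerD.
rewrite mulrCA -[ltRHS]mulr1 ltr_pM2l // ltr_pdivrMr // mul1r.
by rewrite -addrA addrCA ltrDl addr_gt0.
Qed.

Lemma horner_real p y : conjp p = p -> y \is Num.real -> p.[y] \is Num.real.
Proof. by move=> pE yr; rewrite CrealE -conjp_hornerR // pE. Qed.

Lemma real_poly_gt0_near p z : conjp p = p -> z \is Num.real -> 0 < p.[z] ->
  exists2 t0, 0 < t0 & forall t, t \is Num.real -> `|t| <= t0 -> 0 < p.[z + t].
Proof.
move=> pE zr pz_gt0; have [t0 t0_gt0 near] := horner_cont p z pz_gt0.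
exists t0 => // t tr /near; rewrite real_ltr_norml; last first.
  by rewrite rpredB ?horner_real ?rpredD.
by rewrite ltrBrDl subrr => /andP[].
Qed.

Lemma conjp_real_off_roots b g : b != 0 ->
  (forall y, y \is Num.real -> b.[y] != 0 -> g.[y] \is Num.real) -> conjp g = g.
Proof.
move=> b0 g_real; apply/eqP; rewrite -subr_eq0; apply/eqP.
suff : b * (conjp g - g) = 0 by move/eqP; rewrite mulf_eq0 (negbTE b0) => /eqP.
apply: poly_eq0_unit_interval => y yr _; rewrite !hornerE conjp_hornerR //.
have [->|by0] := eqVneq b.[y] 0; first by rewrite mul0r.
by rewrite conj_Creal ?g_real // subrr mulr0.
Qed.

Lemma nonneg_off_roots b g : b != 0 ->
  (forall y, y \is Num.real -> b.[y] != 0 -> 0 <= g.[y]) ->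
  forall y, y \is Num.real -> 0 <= g.[y].
Proof.
move=> b0 g_ge0.
have gE : conjp g = g.
  by apply: (conjp_real_off_roots b0) => y yr /(g_ge0 y yr) /ger0_real.
have NgE : conjp (- g) = - g by rewrite conjpN gE.
move=> y yr; rewrite real_leNgt ?real0 ?horner_real //.
apply/negP => gy_lt0.
have [|t0 t0_gt0 near] := real_poly_gt0_near NgE yr; first by rewrite hornerN oppr_gt0.
have [t [t_gt0 t_le by0]] := exists_nonroot_near y b0 t0_gt0.
have := near t (gtr0_real t_gt0); rewrite gtr0_norm // t_le hornerN => /(_ isT).
have ytr : y + t \is Num.real by rewrite rpredD // gtr0_real.
by rewrite oppr_gt0 real_ltNge ?real0 ?horner_real // g_ge0.
Qed.

End RealPoly.

Section FejerRiesz.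
Variable C : numClosedFieldType.
Implicit Types (f q : {poly C}) (y z : C).

Lemma nonneg_real_root_double q z : z \is Num.real ->
  (forall y, y \is Num.real -> 0 <= (q * ('X - z%:P)).[y]) -> root q z.
Proof.
move=> zr f_ge0; have Xz0 : 'X - z%:P != 0 by rewrite polyXsubC_eq0.
have qE : conjp q = q.
  apply: (conjp_real_off_roots Xz0) => y yr yz.
  have -> : q.[y] = (q * ('X - z%:P)).[y] / ('X - z%:P).[y] by rewrite hornerM mulfK.
  by rewrite realM ?realV ?(ger0_real (f_ge0 y yr)) // hornerXsubC rpredB.
have qNE : conjp (- q) = - q by rewrite conjpN qE.
have f_at t : t \is Num.real -> 0 <= q.[z + t] * t.
  move=> tr; have := f_ge0 (z + t) (rpredD zr tr).
  by rewrite hornerM hornerXsubC addrAC subrr add0r.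
(* Otherwise q * ('X - z) would change sign at z. *)
apply/rootP/eqP/contraT; rewrite real_neqr_lt ?real0 ?horner_real //.
case/orP=> [qz_lt0|qz_gt0].
  have [|t0 t0_gt0 near] := real_poly_gt0_near qNE zr; first by rewrite hornerN oppr_gt0.
  have := near t0 (gtr0_real t0_gt0); rewrite gtr0_norm // lexx hornerN oppr_gt0 => /(_ isT).
  have := f_at t0 (gtr0_real t0_gt0); rewrite pmulr_lge0 // => q_ge0 q_lt0.
  by have := le_lt_trans q_ge0 q_lt0; rewrite ltxx.
have [t0 t0_gt0 near] := real_poly_gt0_near qE zr qz_gt0.
have Nt0r : - t0 \is Num.real by rewrite rpredN gtr0_real.
have := near (- t0) Nt0r; rewrite normrN gtr0_norm // lexx => /(_ isT).
have := f_at (- t0) Nt0r; rewrite nmulr_lge0 ?oppr_lt0 // => q_le0 q_gt0.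
by have := le_lt_trans q_le0 q_gt0; rewrite ltxx.
Qed.

Lemma fejer_riesz f : (forall y, y \is Num.real -> 0 <= f.[y]) ->
  exists g, f = g * conjp g.
Proof.
move: {2}(size f) (leqnn (size f)) => n; elim: n f => [|n IH] f f_size f_ge0.
  by move: f_size; rewrite leqn0 size_poly_eq0 => /eqP->; exists 0; rewrite mul0r.
have [f_const|f_nonconst] := leqP (size f) 1.
  have c_ge0 : 0 <= f`_0 by rewrite -horner_coef0 f_ge0 ?real0.
  exists (sqrtC f`_0)%:P; rewrite [in LHS](size1_polyC f_const) /conjp map_polyC /=.
  by rewrite geC0_conj ?sqrtC_ge0 // -polyCM -expr2 sqrtCK.
have fE : conjp f = f.
  by apply: (@conjp_real_off_roots _ 1) => [|y yr _]; rewrite ?oner_neq0 ?ger0_real ?f_ge0.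
have [z fz] : exists z, root f z by apply/closed_rootP; rewrite neq_ltn f_nonconst orbT.
have /factor_theorem[f1 f1E] := fz.
have /factor_theorem[f2 f2E] : root f1 z^*.
  have [zr|znr] := boolP (z \is Num.real).
    by rewrite conj_Creal //; apply: nonneg_real_root_double; rewrite // -f1E.
  have : root f z^* by rewrite rootE -fE conjp_horner (rootP fz) conjC0.
  rewrite f1E rootM root_XsubC => /orP[//|/eqP zE].
  by move: znr; rewrite CrealE zE eqxx.
have Xz0 : 'X - z%:P != 0 by rewrite polyXsubC_eq0.
have f20 : f2 != 0 by apply: contraTneq f_nonconst => f20; rewrite f1E f2E f20 !mul0r size_poly0.
have f2_size : (size f2 <= n)%N.
  move: f_size; rewrite f1E f2E !size_mul ?mulf_neq0 ?polyXsubC_eq0 //.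
  by rewrite !size_XsubC !addn2 /= => /ltnW.
have f2_ge0 : forall y, y \is Num.real -> 0 <= f2.[y].
  apply: (nonneg_off_roots Xz0) => y yr; rewrite hornerXsubC => yz.
  have := f_ge0 y yr; rewrite f1E f2E !hornerM !hornerXsubC -mulrA.
  have -> : (y - z^*) * (y - z) = `|y - z| ^+ 2.
    by rewrite mulrC normCK rmorphB /= (conj_Creal yr).
  by rewrite pmulr_lge0 // exprn_gt0 // normr_gt0.
have [g2 g2E] := IH f2 f2_size f2_ge0.
exists (g2 * ('X - z%:P)); rewrite conjpM conjpXsubC f1E f2E g2E.
by rewrite -!mulrA; congr (_ * _); rewrite mulrA mulrC.
Qed.

End FejerRiesz.

Definition parity_poly (C : numClosedFieldType) (e : bool) (u : {poly C}) : {poly C} :=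
  'X^e * (u \Po 'X^2).

Section Parity.
Variable C : numClosedFieldType.
Implicit Types (P u : {poly C}) (x : C).

Lemma has_parityE P (z : int) :
  has_parity P z <-> forall j, odd j != odd `|z|%N -> P`_j = 0.
Proof.
rewrite /has_parity /odd_poly_p /even_poly_p.
by case: (odd _); split=> P0 j; case jodd: (odd j) => // _; apply: P0; rewrite jodd.
Qed.

Lemma has_parity_poly (e : bool) u (z : int) :
  odd `|z|%N = e -> has_parity (parity_poly e u) z.
Proof.
move=> <-; apply/has_parityE => j; rewrite /parity_poly coefXnM.
case: ifP => // /negbT; rewrite -leqNgt => je jz.
rewrite coef_comp_poly_Xn // dvdn2 oddB //.
by case: (odd `|z|%N) jz; case: (odd j).
Qed.

Lemma has_parityP P (z : int) :
  has_parity P z -> exists u, P = parity_poly (odd `|z|%N) u.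
Proof.
move=> /has_parityE P0; rewrite /parity_poly.
case zodd: (odd `|z|%N).
  have Pe0 : even_poly P = 0.
    by apply/polyP => i; rewrite coef_even_poly coef0 P0 // odd_double zodd.
  by exists (odd_poly P); rewrite -{1}(poly_even_odd P) Pe0 comp_poly0 add0r mulrC.
have Po0 : odd_poly P = 0.
  by apply/polyP => i; rewrite coef_odd_poly coef0 P0 // oddS odd_double zodd.
by exists (even_poly P); rewrite -{1}(poly_even_odd P) Po0 comp_poly0 mul0r addr0 mul1r.
Qed.

Lemma odd_absz_pred (k : nat) : odd `|(k%:Z - 1)|%N = ~~ odd k.
Proof. by case: k => // k; rewrite -addn1 PoszD addrK absz_nat addn1 /= negbK. Qed.

Lemma conjp_parity_poly e u : conjp (parity_poly e u) = parity_poly e (conjp u).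
Proof. by rewrite /conjp /parity_poly rmorphM rmorphXn /= map_polyX map_comp_poly map_polyXn. Qed.

Lemma mul_conjp_parity_poly e u :
  parity_poly e u * conjp (parity_poly e u) = ('X^e * (u * conjp u)) \Po 'X^2.
Proof.
rewrite conjp_parity_poly /parity_poly !comp_polyM comp_Xn_poly -exprM mulnC exprM.
by rewrite mulrACA expr2.
Qed.

Lemma horner_mul_conjp_parity_poly e u x :
  (parity_poly e u).[x] * (conjp (parity_poly e u)).[x] =
  (x ^+ 2) ^+ e * (u.[x ^+ 2] * (conjp u).[x ^+ 2]).
Proof. by rewrite -hornerM mul_conjp_parity_poly horner_comp !hornerE. Qed.

End Parity.

Lemma size_addr_eq1 (R : nzRingType) (p q : {poly R}) :
  p + q = 1 -> (size q <= maxn 1 (size p))%N.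
Proof.
move/(canRL (addKr p)) => ->.
by apply: leq_trans (size_polyD _ _) _; rewrite size_polyN size_poly1 maxnC.
Qed.

Definition qsp_identity (C : numClosedFieldType) (P Q : {poly C}) : Prop :=
  P * conjp P + (1 - 'X^2) * (Q * conjp Q) = 1.

Section QspIdentity.
Variable C : numClosedFieldType.
Implicit Types (P Q u v : {poly C}) (x : C).

Lemma qsp_identity_horner P Q x : qsp_identity P Q ->
  P.[x] * (conjp P).[x] + (1 - x ^+ 2) * (Q.[x] * (conjp Q).[x]) = 1.
Proof.
by move/(congr1 (horner^~ x)); rewrite /= -polyC1 !(hornerXn, hornerD, hornerN, hornerM, hornerC).
Qed.

Lemma qsp_identity_unit_interval P Q :
  (forall x, x \is Num.real -> -1 <= x <= 1 ->
     `|P.[x]| ^+ 2 + (1 - x ^+ 2) * `|Q.[x]| ^+ 2 = 1) -> qsp_identity P Q.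
Proof.
move=> PQ1; apply/eqP; rewrite -subr_eq0; apply/eqP.
apply: poly_eq0_unit_interval => x xr /andP[x_ge0 x_le1].
rewrite -polyC1 !(hornerXn, hornerD, hornerN, hornerM, hornerC) !horner_mul_conjpR //.
rewrite PQ1 ?subrr // x_le1 andbT.
by rewrite (le_trans _ x_ge0) // lerN10.
Qed.

Lemma qsp_identity_size P Q (k : nat) : qsp_identity P Q ->
  (size P <= k.+1)%N = (size Q <= k)%N.
Proof.
move=> PQ; have := size_addr_eq1 PQ; have := size_addr_eq1 (etrans (addrC _ _) PQ).
have [->|Q0] := eqVneq Q 0.
  rewrite mul0r mulr0 size_poly0 size_mul_conjp; lia.
have X2_size : size (1 - 'X^2 : {poly C}) = 3%N.
  by rewrite -opprB size_polyN -polyC1 size_XnsubC.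
have QQ0 : Q * conjp Q != 0 by rewrite mulf_neq0 // -size_poly_eq0 size_conjp size_poly_eq0.
have X20 : 1 - 'X^2 != 0 :> {poly C} by rewrite -size_poly_eq0 X2_size.
rewrite !size_mul_conjp size_mul // X2_size size_mul_conjp.
have := size_poly_gt0 Q; rewrite Q0; lia.
Qed.

Lemma QSP_condP (k : nat) P Q : QSP_cond k P Q <->
  [/\ (size P <= k.+1)%N, has_parity P k, has_parity Q (k%:Z - 1) & qsp_identity P Q].
Proof.
split=> [[[sP _] [pP pQ] PQ1]|[sP pP pQ PQ]].
  by split=> //; apply: qsp_identity_unit_interval.
split=> //; first by rewrite -(qsp_identity_size k PQ).
by move=> x xr _; rewrite -!horner_mul_conjpR // qsp_identity_horner.
Qed.

Lemma qsp_identity_parity_poly (e : bool) u v :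
  'X^e * (u * conjp u) + (1 - 'X) * ('X^(~~ e) * (v * conjp v)) = 1 ->
  qsp_identity (parity_poly e u) (parity_poly (~~ e) v).
Proof.
move/(congr1 (comp_poly 'X^2)); rewrite /qsp_identity !mul_conjp_parity_poly.
by rewrite comp_polyD !comp_polyM comp_polyB comp_polyX comp_polyC.
Qed.

End QspIdentity.

Section Completion.
Variable C : numClosedFieldType.
Implicit Types (b D u v : {poly C}) (y w : C).

Lemma qsp_sign_P (e : bool) y w : y \is Num.real -> 0 <= w ->
  (0 <= y <= 1 -> y ^+ e * w <= 1) -> (1 <= y -> 1 <= y ^+ e * w) ->
  (~~ e -> y <= 0 -> 1 <= w) ->
  0 <= ((1 - y) * y ^+ (~~ e)) * (1 - y ^+ e * w).
Proof.
move=> yr w_ge0 hA hB hC; have [y_ge0|y_lt0] := real_ge0P yr.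
  have [y_le1|y_gt1] := real_leP yr (rpred1 _).
    by rewrite !mulr_ge0 ?exprn_ge0 ?subr_ge0 ?hA ?y_ge0.
  apply: mulr_le0; last by rewrite subr_le0 hB // ltW.
  by rewrite mulr_le0_ge0 ?exprn_ge0 // subr_le0 ltW.
have y_le1 : y <= 1 by rewrite (le_trans (ltW y_lt0)) ?ler01.
case: e hA hB hC => /= hA hB hC; rewrite ?expr0 ?expr1 ?mulr1 ?mul1r.
  apply: mulr_ge0; first by rewrite subr_ge0.
  by rewrite subr_ge0 (le_trans (mulr_le0_ge0 (ltW y_lt0) w_ge0)) ?ler01.
apply: mulr_le0; last by rewrite subr_le0 hC // ltW.
by rewrite mulr_ge0_le0 ?subr_ge0 // ltW.
Qed.

Lemma qsp_sign_Q (e : bool) y w : y \is Num.real -> 0 <= w ->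
  (0 <= y <= 1 -> (1 - y) * (y ^+ (~~ e) * w) <= 1) ->
  (e -> y <= 0 -> 1 <= (1 - y) * w) ->
  0 <= y ^+ e * (1 - (1 - y) * (y ^+ (~~ e) * w)).
Proof.
move=> yr w_ge0 hA hB; have [y_ge0|y_lt0] := real_ge0P yr.
  have [y_le1|y_gt1] := real_leP yr (rpred1 _).
    by rewrite mulr_ge0 ?exprn_ge0 ?subr_ge0 ?hA ?y_ge0.
  rewrite mulr_ge0 ?exprn_ge0 // subr_ge0 (le_trans _ ler01) //.
  by rewrite mulr_le0_ge0 ?mulr_ge0 ?exprn_ge0 // subr_le0 ltW.
case: e hA hB => /= hA hB; rewrite ?expr0 ?expr1 ?mul1r.
  by apply: mulr_le0; rewrite ?subr_le0 ?hB // ltW.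
have y1_ge0 : 0 <= 1 - y by rewrite subr_ge0 (le_trans (ltW y_lt0)) ?ler01.
by rewrite subr_ge0 (le_trans _ ler01) // mulr_ge0_le0 // mulr_le0_ge0 // ltW.
Qed.

Lemma dvdp_Xn_root0 (n : bool) D : (n -> root D 0) -> 'X^n %| D.
Proof.
case: n => [/(_ isT) D0|_]; last by rewrite expr0 dvd1p.
by rewrite expr1 -['X]subr0 -polyC0 dvdp_XsubCl.
Qed.

Lemma dvdp_1subX_mulXn (n : bool) D : root D 1 -> (n -> root D 0) ->
  (1 - 'X) * 'X^n %| D.
Proof.
move=> D1 D0; rewrite -opprB mulNr dvdpNl Gauss_dvdp.
  by rewrite (dvdp_XsubCl D 1) D1 dvdp_Xn_root0.
case: n {D0} => /=; rewrite ?expr0 ?coprimep1 // expr1 -[X in coprimep _ X]subr0 -polyC0.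
by rewrite coprimep_XsubC rootE hornerXsubC sub0r oppr_eq0 oner_eq0.
Qed.

Lemma fejer_riesz_dvdp b D : b %| D ->
  (forall y, y \is Num.real -> b.[y] \is Num.real) ->
  (forall y, y \is Num.real -> 0 <= b.[y] * D.[y]) ->
  exists v, D = b * (v * conjp v).
Proof.
have [->|b0] := eqVneq b 0; first by rewrite dvd0p => /eqP-> _ _; exists 0; rewrite mul0r.
move=> /divpK; set B := D %/ b => DE b_real bD_ge0.
have B_ge0 : forall y, y \is Num.real -> 0 <= B.[y].
  apply: (nonneg_off_roots b0) => y yr by0.
  have := bD_ge0 y yr; rewrite -DE hornerM mulrCA -expr2 -real_normK ?b_real //.
  by rewrite pmulr_lge0 // exprn_gt0 // normr_gt0.
have [v vE] := fejer_riesz B_ge0.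
by exists v; rewrite -vE mulrC DE.
Qed.

(* Conditions (iv.a)-(iv.c) for P = X^e u(X^2), in the variable y = x^2. *)
Lemma qsp_complete_P (e : bool) u :
  (forall y, y \is Num.real -> 0 <= y <= 1 -> y ^+ e * `|u.[y]| ^+ 2 <= 1) ->
  (forall y, y \is Num.real -> 1 <= y -> 1 <= y ^+ e * `|u.[y]| ^+ 2) ->
  (~~ e -> forall y, y \is Num.real -> y <= 0 -> 1 <= `|u.[y]| ^+ 2) ->
  exists v, 'X^e * (u * conjp u) + (1 - 'X) * ('X^(~~ e) * (v * conjp v)) = 1.
Proof.
move=> hA hB hC; set D := 1 - 'X^e * (u * conjp u).
have D_at y : y \is Num.real -> D.[y] = 1 - y ^+ e * `|u.[y]| ^+ 2.
  move=> yr; rewrite -horner_mul_conjpR //.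
  by rewrite /D -polyC1 !(hornerXn, hornerD, hornerN, hornerM, hornerC).
have D1 : root D 1.
  rewrite rootE D_at ?rpred1 // subr_eq0 eq_le hB ?rpred1 // hA ?rpred1 //.
  by rewrite ler01 lexx.
have b_dvd : (1 - 'X) * 'X^(~~ e) %| D.
  apply: dvdp_1subX_mulXn D1 _ => ne; rewrite rootE D_at ?real0 // expr0n (negbTE ne) /=.
  rewrite mul1r subr_eq0 eq_le hC ?real0 //.
  by have := hA 0; rewrite real0 lexx ler01 expr0n (negbTE ne) mul1r => ->.
have [y yr|y yr|v vE] := fejer_riesz_dvdp b_dvd.
- by rewrite hornerM hornerXn hornerD hornerN hornerX hornerC realM ?rpredB ?rpredX ?rpred1.
- rewrite D_at // hornerM hornerXn hornerD hornerN hornerX hornerC.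
  apply: qsp_sign_P; rewrite ?exprn_ge0 //; [exact: hA | exact: hB | by move=> /hC; apply].
by exists v; rewrite (mulrA (1 - 'X)) -vE addrC subrK.
Qed.

(* Conditions (v.a)-(v.b) for Q = X^(1-e) v(X^2), in the variable y = x^2. *)
Lemma qsp_complete_Q (e : bool) v :
  (forall y, y \is Num.real -> 0 <= y <= 1 ->
     (1 - y) * (y ^+ (~~ e) * `|v.[y]| ^+ 2) <= 1) ->
  (e -> forall y, y \is Num.real -> y <= 0 -> 1 <= (1 - y) * `|v.[y]| ^+ 2) ->
  exists u, 'X^e * (u * conjp u) + (1 - 'X) * ('X^(~~ e) * (v * conjp v)) = 1.
Proof.
move=> hA hB; set D := 1 - (1 - 'X) * ('X^(~~ e) * (v * conjp v)).
have D_at y : y \is Num.real -> D.[y] = 1 - (1 - y) * (y ^+ (~~ e) * `|v.[y]| ^+ 2).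
  move=> yr; rewrite -horner_mul_conjpR //.
  by rewrite /D -polyC1 !(hornerXn, hornerD, hornerN, hornerM, hornerC, hornerX).
have b_dvd : 'X^e %| D.
  apply: dvdp_Xn_root0 => ee.
  have v0_le1 : (1 - 0) * (0 ^+ (~~ e) * `|v.[0]| ^+ 2) <= 1 by rewrite hA ?real0 ?lexx ?ler01.
  rewrite rootE D_at ?real0 // subr_eq0 eq_le v0_le1.
  by rewrite ee expr0 mul1r hB ?real0.
have [y yr|y yr|u uE] := fejer_riesz_dvdp b_dvd.
- by rewrite hornerXn rpredX.
- rewrite D_at // hornerXn.
  by apply: qsp_sign_Q; rewrite ?exprn_ge0 //; [exact: hA | by move=> /hB; apply].
by exists u; rewrite -uE subrK.
Qed.

End Completion.

Section Characterization.
Variable C : numClosedFieldType.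
Implicit Types (P Q u v : {poly C}) (x y : C).

Lemma sqr_iX x : ('i * x) ^+ 2 = - x ^+ 2.
Proof. by rewrite exprMn sqrCi mulN1r. Qed.

Lemma sqrtC_le1 y : 0 <= y -> (sqrtC y <= 1) = (y <= 1).
Proof. by move=> y_ge0; rewrite -[X in _ <= X]sqrtC1 ler_sqrtC ?nnegrE ?ler01. Qed.

Lemma sqrtC_ge1 y : 0 <= y -> (1 <= sqrtC y) = (1 <= y).
Proof. by move=> y_ge0; rewrite -[X in X <= _]sqrtC1 ler_sqrtC ?nnegrE ?ler01. Qed.

Lemma norm_parity_poly e u x : x \is Num.real ->
  `|(parity_poly e u).[x]| ^+ 2 = (x ^+ 2) ^+ e * `|u.[x ^+ 2]| ^+ 2.
Proof.
by move=> xr; rewrite -!horner_mul_conjpR ?rpredX // horner_mul_conjp_parity_poly.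
Qed.

Lemma horner_mul_conjp_parity_poly_iX e u x : x \is Num.real ->
  (parity_poly e u).['i * x] * (conjp (parity_poly e u)).['i * x] =
  (- x ^+ 2) ^+ e * `|u.[- x ^+ 2]| ^+ 2.
Proof.
move=> xr; rewrite horner_mul_conjp_parity_poly sqr_iX.
by rewrite horner_mul_conjpR // rpredN rpredX.
Qed.

Lemma qsp_identity_iX P Q x : qsp_identity P Q ->
  P.['i * x] * (conjp P).['i * x] + (1 + x ^+ 2) * (Q.['i * x] * (conjp Q).['i * x]) = 1.
Proof. by move/(qsp_identity_horner ('i * x)); rewrite sqr_iX opprK. Qed.

Lemma qsp_identity_norm P Q x : qsp_identity P Q -> x \is Num.real ->
  `|P.[x]| ^+ 2 + (1 - x ^+ 2) * `|Q.[x]| ^+ 2 = 1.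
Proof. by move=> PQ xr; rewrite -!horner_mul_conjpR // qsp_identity_horner. Qed.

Lemma qsp_norm_le1 P Q x : qsp_identity P Q -> x \is Num.real -> -1 <= x <= 1 ->
  `|P.[x]| <= 1.
Proof.
move=> PQ xr x_le1; rewrite -(@expr_le1 _ 2) // -(qsp_identity_norm PQ xr) lerDl.
by rewrite mulr_ge0 ?exprn_ge0 // subr_ge0 -real_normK // exprn_ile1 // real_ler_norml.
Qed.

Lemma qsp_norm_ge1 P Q x : qsp_identity P Q -> x \is Num.real -> 1 <= `|x| ->
  1 <= `|P.[x]|.
Proof.
move=> PQ xr x_ge1; rewrite -(@expr_ge1 _ 2) // -(qsp_identity_norm PQ xr) gerDl.
by rewrite mulr_le0_ge0 ?exprn_ge0 // subr_le0 -real_normK // exprn_ege1.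
Qed.

Lemma qsp_sqrt_norm_le1 P Q x : qsp_identity P Q -> x \is Num.real -> -1 <= x <= 1 ->
  sqrtC (1 - x ^+ 2) * `|Q.[x]| <= 1.
Proof.
move=> PQ xr x_le1.
have x2_le1 : 0 <= 1 - x ^+ 2 by rewrite subr_ge0 -real_normK // exprn_ile1 // real_ler_norml.
rewrite -(@expr_le1 _ 2) ?mulr_ge0 ?sqrtC_ge0 // exprMn sqrtCK.
by rewrite -[leRHS](qsp_identity_norm PQ xr) lerDr exprn_ge0.
Qed.

Lemma qsp_iX_ge1_P P v x : qsp_identity P (parity_poly true v) -> x \is Num.real ->
  1 <= P.['i * x] * (conjp P).['i * x].
Proof.
move=> PQ xr; rewrite -[leRHS]addr0 -[leLHS](qsp_identity_iX x PQ) lerD2l.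
have x2_ge0 : 0 <= x ^+ 2 by rewrite -realEsqr.
rewrite horner_mul_conjp_parity_poly_iX // mulr_ge0_le0 ?addr_ge0 ?ler01 //=.
by rewrite mulr_le0_ge0 ?exprn_ge0 // oppr_le0.
Qed.

Lemma qsp_iX_ge1_Q u Q x : qsp_identity (parity_poly true u) Q -> x \is Num.real ->
  1 <= (1 + x ^+ 2) * (Q.['i * x] * (conjp Q).['i * x]).
Proof.
move=> PQ xr; rewrite -[leRHS]add0r -[leLHS](qsp_identity_iX x PQ) lerD2r.
have x2_ge0 : 0 <= x ^+ 2 by rewrite -realEsqr.
by rewrite horner_mul_conjp_parity_poly_iX //= mulr_le0_ge0 ?exprn_ge0 // oppr_le0.
Qed.

End Characterization.

Section Main.
Variables (C : numClosedFieldType) (k : nat).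
Implicit Types (P Q : {poly C}) (y : C).

Lemma QSP_cond_necessary_P P Q : QSP_cond k P Q ->
  [/\ (size P <= k.+1)%N, has_parity P k%:Z,
      (forall x : C, x \is Num.real -> -1 <= x <= 1 -> `|P.[x]| <= 1),
      (forall x : C, x \is Num.real -> 1 <= `|x| -> 1 <= `|P.[x]|)
    & (~~ odd k -> forall x : C, x \is Num.real -> 1 <= P.['i * x] * (conjp P).['i * x])].
Proof.
move=> /QSP_condP[sP pP pQ PQ]; split=> // [x|x|k_even x xr]; first exact: qsp_norm_le1 PQ.
  exact: qsp_norm_ge1 PQ.
have [v Qv] := has_parityP pQ; rewrite odd_absz_pred k_even in Qv.
by rewrite Qv in PQ; apply: qsp_iX_ge1_P PQ xr.
Qed.

Lemma QSP_cond_necessary_Q P Q : QSP_cond k P Q ->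
  [/\ (size Q <= k)%N, has_parity Q (k%:Z - 1),
      (forall x : C, x \is Num.real -> -1 <= x <= 1 -> sqrtC (1 - x ^+ 2) * `|Q.[x]| <= 1)
    & (odd k -> forall x : C, x \is Num.real ->
         1 <= (1 + x ^+ 2) * (Q.['i * x] * (conjp Q).['i * x]))].
Proof.
move=> /QSP_condP[sP pP pQ PQ]; split=> // [|x|k_odd x xr].
- by rewrite -(qsp_identity_size k PQ).
- exact: qsp_sqrt_norm_le1 PQ.
have [u Pu] := has_parityP pP; rewrite absz_nat k_odd in Pu.
by rewrite Pu in PQ; apply: qsp_iX_ge1_Q PQ xr.
Qed.

Lemma QSP_cond_sufficient_P P :
  (size P <= k.+1)%N -> has_parity P k%:Z ->
  (forall x : C, x \is Num.real -> -1 <= x <= 1 -> `|P.[x]| <= 1) ->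
  (forall x : C, x \is Num.real -> 1 <= `|x| -> 1 <= `|P.[x]|) ->
  (~~ odd k -> forall x : C, x \is Num.real -> 1 <= P.['i * x] * (conjp P).['i * x]) ->
  exists Q, QSP_cond k P Q.
Proof.
move=> sP pP hA hB hC; have [u Pu] := has_parityP pP; rewrite absz_nat in Pu.
have Psqrt y : 0 <= y -> `|P.[sqrtC y]| ^+ 2 = y ^+ odd k * `|u.[y]| ^+ 2.
  by move=> y_ge0; rewrite Pu norm_parity_poly ?sqrtC_real // sqrtCK.
have [y yr /andP[y_ge0 y_le1]|y yr y_ge1|k_even y yr y_le0|v uv] :=
  qsp_complete_P (e := odd k) (u := u).
- rewrite -Psqrt // exprn_ile1 // hA ?sqrtC_real //.
  by rewrite sqrtC_le1 // y_le1 (le_trans (lerN10 _)) ?sqrtC_ge0.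
- have y_ge0 := le_trans ler01 y_ge1.
  by rewrite -Psqrt // exprn_ege1 // hB ?sqrtC_real // ger0_norm ?sqrtC_ge0 // sqrtC_ge1.
- have Ny_ge0 : 0 <= - y by rewrite oppr_ge0.
  have := hC k_even _ (sqrtC_real Ny_ge0).
  by rewrite Pu horner_mul_conjp_parity_poly_iX ?sqrtC_real // sqrtCK opprK (negbTE k_even) mul1r.
exists (parity_poly (~~ odd k) v); apply/QSP_condP; split=> //.
  by apply: has_parity_poly; rewrite odd_absz_pred.
by rewrite Pu; apply: qsp_identity_parity_poly.
Qed.

Lemma QSP_cond_sufficient_Q Q :
  (size Q <= k)%N -> has_parity Q (k%:Z - 1) ->
  (forall x : C, x \is Num.real -> -1 <= x <= 1 -> sqrtC (1 - x ^+ 2) * `|Q.[x]| <= 1) ->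
  (odd k -> forall x : C, x \is Num.real ->
     1 <= (1 + x ^+ 2) * (Q.['i * x] * (conjp Q).['i * x])) ->
  exists P, QSP_cond k P Q.
Proof.
move=> sQ pQ hA hB; have [v Qv] := has_parityP pQ; rewrite odd_absz_pred in Qv.
have [y yr /andP[y_ge0 y_le1]|k_odd y yr y_le0|u uv] :=
  qsp_complete_Q (e := odd k) (v := v).
- have x_le1 : -1 <= sqrtC y <= 1.
    by rewrite sqrtC_le1 // y_le1 (le_trans (lerN10 _)) ?sqrtC_ge0.
  have := hA _ (sqrtC_real y_ge0) x_le1; rewrite sqrtCK.
  rewrite -(@expr_le1 _ 2) ?mulr_ge0 ?sqrtC_ge0 ?subr_ge0 // exprMn sqrtCK.
  by rewrite Qv norm_parity_poly ?sqrtC_real // sqrtCK.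
- have Ny_ge0 : 0 <= - y by rewrite oppr_ge0.
  have := hB k_odd _ (sqrtC_real Ny_ge0).
  by rewrite Qv horner_mul_conjp_parity_poly_iX ?sqrtC_real // sqrtCK opprK k_odd mul1r.
have PQ : qsp_identity (parity_poly (odd k) u) Q.
  by rewrite Qv; apply: qsp_identity_parity_poly.
exists (parity_poly (odd k) u); apply/QSP_condP; split=> //.
  by rewrite (qsp_identity_size k PQ).
by apply: has_parity_poly; rewrite absz_nat.
Qed.

End Main.

Theorem mainTheorem2 (C : numClosedFieldType) (k : nat) :
  (forall P : {poly C},
     (exists Q : {poly C}, QSP_cond k P Q) <->
     [/\ (size P <= k.+1)%N,
         has_parity P k%:Z,
         (forall x : C, x \is Num.real -> -1 <= x <= 1 -> `|P.[x]| <= 1),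
         (forall x : C, x \is Num.real -> 1 <= `|x| -> 1 <= `|P.[x]|)
       & (~~ odd k -> forall x : C, x \is Num.real ->
            1 <= P.['i * x] * (conjp P).['i * x])])
  /\
  (forall Q : {poly C},
     (exists P : {poly C}, QSP_cond k P Q) <->
     [/\ (size Q <= k)%N,
         has_parity Q (k%:Z - 1),
         (forall x : C, x \is Num.real -> -1 <= x <= 1 ->
            sqrtC (1 - x ^+ 2) * `|Q.[x]| <= 1)
       & (odd k -> forall x : C, x \is Num.real ->
            1 <= (1 + x ^+ 2) * (Q.['i * x] * (conjp Q).['i * x]))]).
Proof.
split=> [P|Q]; split.
- by case=> Q /QSP_cond_necessary_P.
- by case; apply: QSP_cond_sufficient_P.
- by case=> P /QSP_cond_necessary_Q.
- by case; apply: QSP_cond_sufficient_Q.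
Qed.
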